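(* Let $M_1$ and $M_2$ be homogeneous monoids. Then the free product $M_1*M_2$ is FCRS if and only if both $M_1$ and $M_2$ are FCRS.
   Context: A monoid is homogeneous if it admits a finite presentation $\langle A\mid\mathcal{R}\rangle$ with $|u|=|v|$ for all $(u,v)\in\mathcal{R}$. A monoid is FCRS if it admits a presentation by a finite complete (noetherian and confluent) string rewriting system over some finite generating set. *)

From mathcomp Require Import all_boot.
From Stdlib Require Import Relation_Operators.

Set Implicit Arguments. Unset Strict Implicit. Unset Printing Implicit Defensive.

Record monoid := Monoid {
  mcar :> Type;
  mop : mcar -> mcar -> mcar;
  munit : mcar;
  mopA : forall x y z, mop x (mop y z) = mop (mop x y) z;
  mop1x : forall x, mop munit x = x;
  mopx1 : forall x, mop x munit = x
}.

Definition is_hom (M N : monoid) (f : M -> N) : Prop :=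
  f (munit M) = munit N /\ forall x y, f (mop x y) = mop (f x) (f y).

Definition rules (A : finType) := seq (seq A * seq A).

Definition rstep (A : finType) (R : rules A) (u v : seq A) : Prop :=
  exists x y l r, (l, r) \in R /\ u = x ++ l ++ y /\ v = x ++ r ++ y.

Definition rcong (A : finType) (R : rules A) := clos_refl_sym_trans _ (rstep R).

Definition presents (M : monoid) (A : finType) (R : rules A) : Prop :=
  exists phi : seq A -> M,
    phi [::] = munit M /\ (forall u v, phi (u ++ v) = mop (phi u) (phi v)) /\
    (forall m : M, exists u, phi u = m) /\
    (forall u v, phi u = phi v <-> rcong R u v).

Definition homogeneous (M : monoid) : Prop :=
  exists (A : finType) (R : rules A), @presents M A R /\
    forall p, p \in R -> size p.1 = size p.2.

Definition noetherian (A : finType) (R : rules A) : Prop :=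
  well_founded (fun v u => rstep R u v).

Definition confluent (A : finType) (R : rules A) : Prop :=
  forall w u v, clos_refl_trans _ (rstep R) w u -> clos_refl_trans _ (rstep R) w v ->
    exists z, clos_refl_trans _ (rstep R) u z /\ clos_refl_trans _ (rstep R) v z.

Definition FCRS (M : monoid) : Prop :=
  exists (A : finType) (R : rules A), @presents M A R /\ noetherian R /\ confluent R.

Definition is_free_product (M1 M2 P : monoid) (i1 : M1 -> P) (i2 : M2 -> P) : Prop :=
  is_hom i1 /\ is_hom i2 /\
  forall (N : monoid) (f1 : M1 -> N) (f2 : M2 -> N), is_hom f1 -> is_hom f2 ->
    (exists h : P -> N, is_hom h /\ (forall x, h (i1 x) = f1 x) /\ (forall y, h (i2 y) = f2 y)) /\
    (forall h h' : P -> N, is_hom h -> is_hom h' ->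
       (forall x, h (i1 x) = f1 x) -> (forall y, h (i2 y) = f2 y) ->
       (forall x, h' (i1 x) = f1 x) -> (forall y, h' (i2 y) = f2 y) ->
       forall p, h p = h' p).

(* If R1 and R2 are complete systems presenting M1 and M2, their disjoint union
   over the disjoint union of the alphabets presents M1 * M2.  It terminates
   because a step decreases the pair of projections onto the two alphabets
   lexicographically, and it is confluent by Hindley-Rosen: rules over disjoint
   alphabets with nonempty left-hand sides commute.

   Conversely, homogeneity of M2 yields a length morphism M2 -> N vanishing only
   at 1, hence a degree on M1 * M2 whose zero set is the image of M1.  The rules
   of any presentation of M1 * M2 preserve degree, so a complete system for
   M1 * M2 restricted to its letters of degree zero is complete; by confluence
   it presents the retract M1. *)

From Pilot Require Import Defs.
From mathcomp Require Import all_boot.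
From Stdlib Require Import Relation_Definitions Relation_Operators Operators_Properties.
From Stdlib Require Import Inclusion Inverse_Image Lexicographic_Product.
From Stdlib Require Import ProofIrrelevance ClassicalEpsilon.
From Stdlib Require Import FunctionalExtensionality PropExtensionality.

Set Implicit Arguments. Unset Strict Implicit. Unset Printing Implicit Defensive.

Local Notation rtc := (clos_refl_trans _).

Lemma rtc_mono (T : Type) (r s : relation T) :
  inclusion T r s -> inclusion T (rtc r) (rtc s).
Proof.
move=> rs x y; elim=> [a b /rs|a|a b c _ IH1 _ IH2];
  [exact: rt_step|exact: rt_refl|exact: rt_trans IH2].
Qed.

Section Commutation.

Variable T : Type.
Implicit Types r s : relation T.

Definition commute r s :=
  forall a b c, rtc r a b -> rtc s a c -> exists d, rtc s b d /\ rtc r c d.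

Lemma commute_of_step r s :
  (forall a b c, r a b -> s a c -> exists d, s b d /\ r c d) -> commute r s.
Proof.
move=> rs.
have strip a c : rtc s a c -> forall b, r a b -> exists d, rtc s b d /\ r c d.
  move: a; apply: clos_refl_trans_ind_right => [b rcb|a a' saa' IH _ b rab].
    by exists b; split; [exact: rt_refl|].
  have [d [sbd ra'd]] := rs _ _ _ rab saa'.
  have [e [sde rce]] := IH _ ra'd.
  by exists e; split => //; apply: rt_trans sde; exact: rt_step.
move=> a b c rab; move: a rab c.
apply: clos_refl_trans_ind_right => [c sbc|a a' raa' IH _ c sac].
  by exists c; split; [|exact: rt_refl].
have [d [sa'd rcd]] := strip _ _ sac _ raa'.
have [e [sbe rde]] := IH _ sa'd.
by exists e; split => //; apply: rt_trans rde; exact: rt_step.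
Qed.

Lemma commute_union r s :
  commute r r -> commute s s -> commute r s -> commute (union T r s) (union T r s).
Proof.
move=> crr css crs.
pose X := union T (rtc r) (rtc s).
have rtcX a b : rtc (union T r s) a b <-> rtc X a b.
  split; first by apply: rtc_mono => x y [rxy|sxy]; [left|right]; exact: rt_step.
  move=> ab; apply: clos_rt_idempotent; apply: rtc_mono ab => x y [] xy.
  - by apply: rtc_mono xy => ? ? ?; left.
  - by apply: rtc_mono xy => ? ? ?; right.
have diamondX : commute X X.
  apply: commute_of_step => a b c [ab|ab] [ac|ac].
  - by have [d [? ?]] := crr _ _ _ ab ac; exists d; split; left.
  - by have [d [? ?]] := crs _ _ _ ab ac; exists d; split; [right|left].
  - by have [d [? ?]] := crs _ _ _ ac ab; exists d; split; [left|right].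
  - by have [d [? ?]] := css _ _ _ ab ac; exists d; split; right.
move=> a b c /rtcX ab /rtcX ac; have [d [bd cd]] := diamondX _ _ _ ab ac.
by exists d; split; apply/rtcX.
Qed.

End Commutation.

Lemma cat_eq_prefix (T : Type) (x1 w1 x2 w2 : seq T) :
  x1 ++ w1 = x2 ++ w2 -> size x1 <= size x2 ->
  exists2 k, x2 = x1 ++ k & w1 = k ++ w2.
Proof.
move=> E le; have Ex2 : x2 = x1 ++ drop (size x1) x2.
  have := congr1 (take (size x1)) E.
  rewrite take_size_cat // takel_cat // => E1.
  by rewrite -{1}(cat_take_drop (size x1) x2) -E1.
exists (drop (size x1) x2) => //.
by have := congr1 (drop (size x1)) E; rewrite {1}Ex2 -catA !drop_size_cat.
Qed.

Lemma cat_factor_before (T : eqType) (x1 l1 y1 x2 l2 y2 : seq T) :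
  l2 != [::] -> (forall c, c \in l1 -> c \in l2 -> False) ->
  x1 ++ l1 ++ y1 = x2 ++ l2 ++ y2 -> size x1 <= size x2 ->
  exists2 m, x2 = x1 ++ l1 ++ m & y1 = m ++ l2 ++ y2.
Proof.
move=> nz dis E le; have {E} [k Ex2 Ek] := cat_eq_prefix E le.
have [lek|ltk] := leqP (size l1) (size k).
  by have [m Ek1 ->] := cat_eq_prefix Ek lek; exists m; rewrite // Ex2 Ek1.
case: l2 nz Ek dis => // c l2 _ Ek dis; exfalso; apply: (dis c); last exact: mem_head.
have := congr1 (nth c ^~ (size k)) Ek; rewrite /= !nth_cat ltnn subnn ltk /= => <-.
exact: mem_nth.
Qed.

Section StringRewriting.

Variables (A : finType) (R : rules A).

Lemma rstep_at x y l r : (l, r) \in R -> rstep R (x ++ l ++ y) (x ++ r ++ y).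
Proof. by move=> lr; exists x, y, l, r. Qed.

Lemma rstep_ctx p q u v : rstep R u v -> rstep R (p ++ u ++ q) (p ++ v ++ q).
Proof.
case=> x [y [l [r [lr [-> ->]]]]].
by have := rstep_at (p ++ x) (y ++ q) lr; rewrite !catA.
Qed.

Lemma rtc_ctx p q u v :
  rtc (rstep R) u v -> rtc (rstep R) (p ++ u ++ q) (p ++ v ++ q).
Proof.
elim=> [a b /(rstep_ctx p q)|a|a b c _ IH1 _ IH2];
  [exact: rt_step|exact: rt_refl|exact: rt_trans IH2].
Qed.

Lemma rcong_ctx p q u v : rcong R u v -> rcong R (p ++ u ++ q) (p ++ v ++ q).
Proof.
elim=> [a b /(rstep_ctx p q)|a|a b _ IH|a b c _ IH1 _ IH2];
  [exact: rst_step|exact: rst_refl|exact: rst_sym|exact: rst_trans IH2].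
Qed.

Lemma rcong_cat u u' v v' : rcong R u u' -> rcong R v v' -> rcong R (u ++ v) (u' ++ v').
Proof.
move=> uu' vv'; apply: (@rst_trans _ _ _ (u' ++ v)).
  by have := rcong_ctx [::] v uu'.
by have := rcong_ctx u' [::] vv'; rewrite !cats0.
Qed.

Lemma rcong_confluent u v :
  confluent R -> rcong R u v -> exists z, rtc (rstep R) u z /\ rtc (rstep R) v z.
Proof.
move=> conf; elim=> {u v} [u v uv|u|u v _ [z [? ?]]|u v w _ [z1 [uz1 vz1]] _ [z2 [vz2 wz2]]].
- by exists v; split; [exact: rt_step|exact: rt_refl].
- by exists u; split; exact: rt_refl.
- by exists z.
- have [z [z1z z2z]] := conf _ _ _ vz1 vz2.
  by exists z; split; [exact: rt_trans z1z|exact: rt_trans z2z].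
Qed.

Lemma noetherian_lhs_neq0 p : noetherian R -> p \in R -> p.1 != [::].
Proof.
case: p => l r wf lr; apply/eqP => /= l0; subst l.
have loop u : Acc (fun v u => rstep R u v) u -> False.
  by elim=> {}u _ IH; apply: (IH (r ++ u)); have := rstep_at [::] u lr.
exact: loop (wf [::]).
Qed.

Lemma rtc_split (Q : pred A) c s t w :
  (forall p, p \in R -> all Q p.1) -> ~~ Q c -> rtc (rstep R) (s ++ c :: t) w ->
  exists s' t', [/\ w = s' ++ c :: t', rtc (rstep R) s s' & rtc (rstep R) t t'].
Proof.
move=> lhsQ Qc stw.
have gen a : rtc (rstep R) a w -> forall s t, a = s ++ c :: t ->
    exists s' t', [/\ w = s' ++ c :: t', rtc (rstep R) s s' & rtc (rstep R) t t'].
  move: a; apply: clos_refl_trans_ind_right => [s0 t0 ->|a b ab IH _ s0 t0 Ea].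
    by exists s0, t0; split => //; exact: rt_refl.
  case: ab Ea => x [y [l [r [lr [-> Eb]]]]] E; subst b.
  have cl c' : c' \in l -> c' \in [:: c] -> False.
    by move=> c'l; rewrite inE => /eqP Ec; move: Qc; rewrite -Ec (allP (lhsQ _ lr)).
  have [le|lt] := leqP (size x) (size s0).
  - have [m Es0 Ey] := cat_factor_before (l2 := [:: c]) isT cl E le.
    have Eb : x ++ r ++ y = (x ++ r ++ m) ++ c :: t0 by rewrite Ey -!catA.
    have [s' [t' [-> s's t't]]] := IH _ _ Eb.
    exists s', t'; split => //; apply: rt_trans s's; rewrite Es0.
    exact/rt_step/rstep_at.
  - have [[|c' m] Ex Et] := cat_eq_prefix (esym E) (ltnW lt).
      by rewrite Ex cats0 ltnn in lt.
    case: Et => Ec Et; subst c'.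
    have Eb : x ++ r ++ y = s0 ++ c :: m ++ r ++ y by rewrite Ex -catA.
    have [s' [t' [-> s's t't]]] := IH _ _ Eb.
    exists s', t'; split => //; apply: rt_trans t't; rewrite Et.
    exact/rt_step/rstep_at.
exact: gen stw s t erefl.
Qed.

(* A letter occurring in no left-hand side splits a word into independent blocks. *)
Lemma confluent_blocks (Q : pred A) :
  (forall p, p \in R -> all Q p.1) ->
  (forall w u v, all Q w -> rtc (rstep R) w u -> rtc (rstep R) w v ->
     exists z, rtc (rstep R) u z /\ rtc (rstep R) v z) ->
  confluent R.
Proof.
move=> lhsQ confQ w.
have [n] : exists n, size w < n by exists (size w).+1.
elim: n w => [//|n IH] w; rewrite ltnS => wn u v wu wv.
have [/confQ|] := boolP (all Q w); first exact.
case/allPn => c cw Qc; case/splitPr: cw wn wu wv => s t wn wu wv.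
have [su [tu [-> ssu ttu]]] := rtc_split lhsQ Qc wu.
have [sv [tv [-> ssv ttv]]] := rtc_split lhsQ Qc wv.
rewrite size_cat /= addnS in wn.
have [zs [suz svz]] := IH s (leq_ltn_trans (leq_addr _ _) wn) _ _ ssu ssv.
have [zt [tuz tvz]] := IH t (leq_ltn_trans (leq_addl _ _) wn) _ _ ttu ttv.
have join s1 t1 : rtc (rstep R) s1 zs -> rtc (rstep R) t1 zt ->
    rtc (rstep R) (s1 ++ c :: t1) (zs ++ c :: zt).
  move=> s1z t1z; apply: (@rt_trans _ _ _ (zs ++ c :: t1)).
    by have := rtc_ctx [::] (c :: t1) s1z.
  by have := rtc_ctx (zs ++ [:: c]) [::] t1z; rewrite !cats0 -!catA.
by exists (zs ++ c :: zt); split; apply: join.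
Qed.

End StringRewriting.

Lemma commute_disjoint_rules (A : finType) (R1 R2 : rules A) :
  (forall p, p \in R1 -> p.1 != [::]) -> (forall q, q \in R2 -> q.1 != [::]) ->
  (forall p q c, p \in R1 -> q \in R2 -> c \in p.1 -> c \in q.1 -> False) ->
  commute (rstep R1) (rstep R2).
Proof.
move=> ne1 ne2 dis; apply: commute_of_step => w u v.
case=> x1 [y1 [l1 [r1 [lr1 [-> ->]]]]] [x2 [y2 [l2 [r2 [lr2 [E ->]]]]]].
have [le|lt] := leqP (size x1) (size x2).
- have [m -> ->] := cat_factor_before (ne2 _ lr2) (fun c => dis _ _ c lr1 lr2) E le.
  exists (x1 ++ r1 ++ m ++ r2 ++ y2); split.
  + by have := rstep_at (x1 ++ r1 ++ m) y2 lr2; rewrite -!catA.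
  + by have := rstep_at x1 (m ++ r2 ++ y2) lr1; rewrite -!catA.
- have [m -> ->] := cat_factor_before (ne1 _ lr1)
    (fun c c2 c1 => dis _ _ c lr1 lr2 c1 c2) (esym E) (ltnW lt).
  exists (x2 ++ r2 ++ m ++ r1 ++ y1); split.
  + by have := rstep_at x2 (m ++ r1 ++ y1) lr2; rewrite -!catA.
  + by have := rstep_at (x2 ++ r2 ++ m) y1 lr1; rewrite -!catA.
Qed.

Definition map_rules (A B : finType) (f : A -> B) (R : rules A) : rules B :=
  [seq (map f p.1, map f p.2) | p <- R].

Definition step_reflecting (A B : finType) (f : A -> B) (R : rules A) (R' : rules B) :=
  forall s v, rstep R' (map f s) v -> exists s', v = map f s' /\ rstep R s s'.

Section MapRules.

Variables (A B : finType) (f : A -> B) (R : rules A) (R' : rules B).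
Hypothesis subR : {subset map_rules f R <= R'}.

Lemma rstep_map s t : rstep R s t -> rstep R' (map f s) (map f t).
Proof.
case=> x [y [l [r [lr [-> ->]]]]]; rewrite !map_cat; apply: rstep_at.
by apply/subR/mapP; exists (l, r).
Qed.

Lemma rtc_map s t : rtc (rstep R) s t -> rtc (rstep R') (map f s) (map f t).
Proof.
elim=> [a b /rstep_map|a|a b c _ IH1 _ IH2];
  [exact: rt_step|exact: rt_refl|exact: rt_trans IH2].
Qed.

Lemma rcong_map s t : rcong R s t -> rcong R' (map f s) (map f t).
Proof.
elim=> [a b /rstep_map|a|a b _ IH|a b c _ IH1 _ IH2];
  [exact: rst_step|exact: rst_refl|exact: rst_sym|exact: rst_trans IH2].
Qed.

Lemma noetherian_map : noetherian R' -> noetherian R.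
Proof.
move=> wf; apply: wf_incl (wf_inverse_image _ _ _ (map f) wf) => v u.
exact: rstep_map.
Qed.

Hypothesis reflR : step_reflecting f R R'.

Lemma rtc_reflect s w :
  rtc (rstep R') (map f s) w -> exists s', w = map f s' /\ rtc (rstep R) s s'.
Proof.
have gen a : rtc (rstep R') a w -> forall s, a = map f s ->
    exists s', w = map f s' /\ rtc (rstep R) s s'.
  move: a; apply: clos_refl_trans_ind_right => [s0 ->|a b ab IH _ s0 Ea].
    by exists s0; split; [|exact: rt_refl].
  rewrite Ea in ab; have [t [Eb s0t]] := reflR ab.
  have [s' [-> ts']] := IH _ Eb.
  by exists s'; split => //; apply: rt_trans ts'; exact: rt_step.
by move=> /gen; apply.
Qed.

Hypothesis f_inj : injective f.

Lemma confluent_reflect : confluent R' -> confluent R.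
Proof.
move=> conf w u v /rtc_map wu /rtc_map wv.
have [z [uz vz]] := conf _ _ _ wu wv.
have [u' [Eu uu']] := rtc_reflect uz; have [v' [Ev vv']] := rtc_reflect vz.
by exists u'; split; rewrite // (inj_map f_inj (etrans (esym Eu) Ev)).
Qed.

Lemma rcong_reflect u v : confluent R' -> rcong R' (map f u) (map f v) -> rcong R u v.
Proof.
move=> conf /(rcong_confluent conf) [z [uz vz]].
have [u' [Eu uu']] := rtc_reflect uz; have [v' [Ev vv']] := rtc_reflect vz.
apply: (@rst_trans _ _ _ u'); first exact: clos_rt_clos_rst.
by rewrite (inj_map f_inj (etrans (esym Eu) Ev)); apply/rst_sym/clos_rt_clos_rst.
Qed.

End MapRules.

Section Embedding.

Variables (A B : finType) (f : A -> B) (g : B -> option A).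
Hypotheses (fK : pcancel f g) (gK : ocancel g f).

Local Notation in_image := (isSome \o g).

Lemma pmapK w : all in_image w -> map f (pmap g w) = w.
Proof. by rewrite (pmap_filter gK) => /all_filterP. Qed.

Lemma all_in_image s : all in_image (map f s).
Proof. by rewrite all_map; apply/allP => a _ /=; rewrite fK. Qed.

Lemma reflecting_of_rules (R : rules A) (R' : rules B) :
  (forall l r, (l, r) \in R' -> all in_image l ->
     exists2 p, p \in R & (l, r) = (map f p.1, map f p.2)) ->
  step_reflecting f R R'.
Proof.
move=> HR s v [x [y [l [r [lr [Es ->]]]]]].
have := all_in_image s; rewrite Es !all_cat => /and3P[gx gl gy].
have [[l0 r0] lr0 [El Er]] := HR _ _ lr gl; subst l r.
exists (pmap g x ++ r0 ++ pmap g y); split; first by rewrite !map_cat !pmapK.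
by rewrite -(map_pK fK s) Es !pmap_cat (map_pK fK); apply: rstep_at.
Qed.

Lemma map_rules_reflecting (R : rules A) : step_reflecting f R (map_rules f R).
Proof.
by apply: reflecting_of_rules => l r /mapP[p pR [-> ->]] _; exists p.
Qed.

Lemma confluent_map_rules (R : rules A) : confluent R -> confluent (map_rules f R).
Proof.
move=> conf; apply: (confluent_blocks (Q := in_image)).
  by move=> _ /mapP[p _ ->]; exact: all_in_image.
have reflR := @map_rules_reflecting R.
move=> w u v /pmapK <- /(rtc_reflect reflR) [u' [-> wu']] /(rtc_reflect reflR) [v' [-> wv']].
have [z [u'z v'z]] := conf _ _ _ wu' wv'.
by exists (map f z); split; apply: (rtc_map (fun _ => id)).
Qed.

Lemma rstep_pmap (R : rules A) u v :
  rstep (map_rules f R) u v -> rstep R (pmap g u) (pmap g v).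
Proof.
case=> x [y [_ [_ [/mapP[[l r] lr [-> ->]] [-> ->]]]]] /=.
by rewrite !pmap_cat !(map_pK fK); apply: rstep_at.
Qed.

Definition restrict (R' : rules B) : rules A :=
  [seq (pmap g p.1, pmap g p.2) | p <- R' & all in_image p.1 && all in_image p.2].

Lemma restrict_sub (R' : rules B) : {subset map_rules f (restrict R') <= R'}.
Proof.
move=> _ /mapP[_ /mapP[[l r] + ->] ->]; rewrite mem_filter /=.
by case/andP => /andP[gl gr] lr; rewrite !pmapK.
Qed.

Lemma restrict_reflecting (R' : rules B) :
  (forall l r, (l, r) \in R' -> all in_image l -> all in_image r) ->
  step_reflecting f (restrict R') R'.
Proof.
move=> closed; apply: reflecting_of_rules => l r lr gl.
have gr := closed _ _ lr gl.
exists (pmap g l, pmap g r); last by rewrite /= !pmapK.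
by apply/mapP; exists (l, r); rewrite // mem_filter /= gl gr.
Qed.

End Embedding.

Lemma pmap_rstep_eq (A B C : finType) (f : A -> B) (h : B -> option C) (R : rules A) u v :
  (forall a, h (f a) = None) -> rstep (map_rules f R) u v -> pmap h u = pmap h v.
Proof.
move=> hf; have h0 s : pmap h (map f s) = [::] by elim: s => //= a s ->; rewrite hf.
by case=> x [y [_ [_ [/mapP[[l r] _ [-> ->]] [-> ->]]]]]; rewrite !pmap_cat !h0.
Qed.

Section SumRules.

Variables (A1 A2 : finType) (R1 : rules A1) (R2 : rules A2).

Definition unl (c : (A1 + A2)%type) : option A1 := if c is inl a then Some a else None.
Definition unr (c : (A1 + A2)%type) : option A2 := if c is inr a then Some a else None.

Lemma inlK : pcancel inl unl. Proof. by []. Qed.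
Lemma inrK : pcancel inr unr. Proof. by []. Qed.
Lemma unlK : ocancel unl inl. Proof. by case. Qed.
Lemma unrK : ocancel unr inr. Proof. by case. Qed.

Definition sum_rules : rules (A1 + A2)%type := map_rules inl R1 ++ map_rules inr R2.

Lemma rstep_sum u v :
  rstep sum_rules u v <-> union _ (rstep (map_rules inl R1)) (rstep (map_rules inr R2)) u v.
Proof.
split; first by case=> x [y [l [r [+ E]]]]; rewrite mem_cat => /orP[] lr;
  [left|right]; exists x, y, l, r.
by case=> [] [x [y [l [r [lr E]]]]]; exists x, y, l, r; rewrite mem_cat lr ?orbT.
Qed.

Lemma noetherian_sum : noetherian R1 -> noetherian R2 -> noetherian sum_rules.
Proof.
move=> wf1 wf2.
apply: wf_incl (wf_inverse_image _ _ _ (fun w => (pmap unl w, pmap unr w))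
  (wf_slexprod _ _ _ _ wf1 wf2)) => v u /rstep_sum [] uv.
- exact/left_slex/(rstep_pmap inlK).
- by rewrite (pmap_rstep_eq (h := unl) _ uv) //; exact/right_slex/(rstep_pmap inrK).
Qed.

Lemma confluent_sum :
  noetherian R1 -> noetherian R2 -> confluent R1 -> confluent R2 -> confluent sum_rules.
Proof.
move=> wf1 wf2 c1 c2.
have lhs_neq0 (B : finType) (f : B -> (A1 + A2)%type) (R : rules B) p :
    noetherian R -> p \in map_rules f R -> p.1 != [::].
  by move=> wf /mapP[q qR ->]; have := noetherian_lhs_neq0 wf qR; case: q.1.
have comm : commute (rstep (map_rules inl R1)) (rstep (map_rules inr R2)).
  apply: commute_disjoint_rules => [p|q|p q c]; [exact: lhs_neq0|exact: lhs_neq0|].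
  by move=> /mapP[? _ ->] /mapP[? _ ->] /mapP[? _ ->] /mapP[].
have := commute_union (confluent_map_rules inlK unlK c1)
  (confluent_map_rules inrK unrK c2) comm.
move=> conf w u v wu wv.
have toU := rtc_mono (fun x y => proj1 (rstep_sum x y)).
have ofU := rtc_mono (fun x y => proj2 (rstep_sum x y)).
have [z [uz vz]] := conf _ _ _ (toU _ _ wu) (toU _ _ wv).
by exists z; split; apply: ofU.
Qed.

End SumRules.

Definition presentation (M : monoid) (A : finType) (R : rules A) (phi : seq A -> M) :=
  phi [::] = munit M /\ (forall u v, phi (u ++ v) = mop (phi u) (phi v)) /\
  (forall m : M, exists u, phi u = m) /\ (forall u v, phi u = phi v <-> rcong R u v).

Lemma hom1 (M N : monoid) (f : M -> N) : is_hom f -> f (munit M) = munit N.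
Proof. by case. Qed.

Lemma homM (M N : monoid) (f : M -> N) x y : is_hom f -> f (mop x y) = mop (f x) (f y).
Proof. by case=> _ ->. Qed.

Lemma presentation_rule (M : monoid) (A : finType) (R : rules A) (phi : seq A -> M) l r :
  presentation R phi -> (l, r) \in R -> phi l = phi r.
Proof.
case=> _ [_ [_ phiK]] lr; apply/phiK/rst_step.
by have := rstep_at [::] [::] lr; rewrite /= !cats0.
Qed.

Definition nat_monoid : monoid := @Defs.Monoid nat addn 0 addnA add0n addn0.

Lemma homogeneous_degree (M : monoid) :
  homogeneous M -> exists d : M -> nat_monoid, is_hom d /\ forall y, d y = 0 -> y = munit M.
Proof.
case=> A [R [[phi [phi0 [phiM [phiS phiK]]]] sizeR]].
have rcong_size u v : rcong R u v -> size u = size v.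
  elim=> {u v} [u v [x [y [l [r [lr [-> ->]]]]]]|//|//|u v w _ -> _ ->//].
  by rewrite !size_cat (sizeR _ lr).
pose rep y := proj1_sig (constructive_indefinite_description _ (phiS y)).
have repK y : phi (rep y) = y := proj2_sig (constructive_indefinite_description _ (phiS y)).
have size_rep u : size (rep (phi u)) = size u by apply/rcong_size/phiK; rewrite repK.
exists (fun y => size (rep y)); split; first split.
- by rewrite -phi0 size_rep.
- by move=> x y; rewrite -(repK x) -(repK y) -phiM !size_rep size_cat.
- by move=> y /size0nil rep0; rewrite -(repK y) rep0.
Qed.

Lemma sval_inj (T : Type) (S : T -> Prop) : injective (@sval T S).
Proof. by apply: eq_sig_hprop => *; exact: proof_irrelevance. Qed.

Definition submonoid (P : monoid) (S : P -> Prop) (S1 : S (munit P))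
  (SM : forall p q, S p -> S q -> S (mop p q)) : monoid.
Proof.
refine (@Defs.Monoid {p | S p}
  (fun x y => exist _ (mop (sval x) (sval y)) (SM _ _ (svalP x) (svalP y)))
  (exist _ (munit P) S1) _ _ _) => *; apply: sval_inj;
  by rewrite /= ?mopA ?mop1x ?mopx1.
Defined.

Section FreeProduct.

Variables (M1 M2 P : monoid) (i1 : M1 -> P) (i2 : M2 -> P).
Hypothesis FP : is_free_product i1 i2.

(* The submonoid generated by the factors receives a morphism from P extending
   i1 and i2; by uniqueness, its inclusion composed with that morphism is the identity. *)
Lemma free_product_ind (S : P -> Prop) :
  S (munit P) -> (forall p q, S p -> S q -> S (mop p q)) ->
  (forall x, S (i1 x)) -> (forall y, S (i2 y)) -> forall p, S p.
Proof.
case: FP => h1 [h2 U] S1 SM Si1 Si2.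
pose N := submonoid S1 SM.
have hom_sub (M : monoid) (i : M -> P) (Si : forall x, S (i x)) : is_hom i ->
    is_hom (fun x => exist S (i x) (Si x) : N).
  by move=> hi; split => [|x y]; apply: sval_inj; rewrite /= ?(hom1 hi) ?(homM _ _ hi).
have [[h [hh [e1 e2]]] _] := U N _ _ (hom_sub _ _ Si1 h1) (hom_sub _ _ Si2 h2).
have [_ uniq] := U P i1 i2 h1 h2.
have hv : is_hom (fun p => sval (h p)) by split => [|x y]; rewrite ?(hom1 hh) ?(homM _ _ hh).
move=> p; rewrite -(uniq _ (fun p => p) hv _ (fun x => congr1 sval (e1 x))
  (fun y => congr1 sval (e2 y)) (fun _ => erefl) (fun _ => erefl) p) //.
exact: svalP.
Qed.

Lemma free_product_degree (d : M2 -> nat_monoid) :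
  is_hom d -> (forall y, d y = 0 -> y = munit M2) ->
  exists (deg : P -> nat_monoid) (pi1 : P -> M1), [/\ is_hom deg, is_hom pi1,
    forall x, deg (i1 x) = 0, forall x, pi1 (i1 x) = x &
    forall p, deg p = 0 -> p = i1 (pi1 p)].
Proof.
move=> hd d0; case: FP => h1 [h2 U].
have hzero : is_hom (fun _ : M1 => 0 : nat_monoid) by [].
have [[deg [hdeg [deg1 deg2]]] _] := U _ _ _ hzero hd.
have hid : is_hom (fun x : M1 => x) by [].
have hunit : is_hom (fun _ : M2 => munit M1) by split => // x y; rewrite mop1x.
have [[pi1 [hpi [pi1K pi2]]] _] := U _ _ _ hid hunit.
exists deg, pi1; split => //.
apply: free_product_ind => [_|p q IHp IHq|x _|y].
- by rewrite (hom1 hpi) (hom1 h1).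
- rewrite (homM _ _ hdeg) => /eqP; rewrite addn_eq0 => /andP[/eqP/IHp {1}-> /eqP/IHq {1}->].
  by rewrite (homM _ _ hpi) (homM _ _ h1).
- by rewrite pi1K.
- by rewrite deg2 => /d0 ->; rewrite pi2 (hom1 h1) (hom1 h2).
Qed.

End FreeProduct.

Lemma free_product_sym (M1 M2 P : monoid) (i1 : M1 -> P) (i2 : M2 -> P) :
  is_free_product i1 i2 -> is_free_product i2 i1.
Proof.
case=> h1 [h2 U]; do 2!split => //; move=> N f2 f1 hf2 hf1.
have [[h [hh [e1 e2]]] uniq] := U N f1 f2 hf1 hf2.
by split; [exists h|move=> g g' hg hg' *; exact: uniq].
Qed.

Section Quotient.

Variables (A : finType) (R : rules A).

Definition class_cat (S T : seq A -> Prop) : seq A -> Prop :=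
  fun w => exists u v, [/\ S u, T v & rcong R (u ++ v) w].

Lemma class_catE u v : class_cat (rcong R u) (rcong R v) = rcong R (u ++ v).
Proof.
apply: functional_extensionality => w; apply: propositional_extensionality; split.
  by case=> u' [v' [uu' vv' u'v'w]]; apply: rst_trans u'v'w; apply: rcong_cat.
by move=> uvw; exists u, v; split => //; exact: rst_refl.
Qed.

Definition class := {S : seq A -> Prop | exists u, S = rcong R u}.

Definition cls u : class := exist _ (rcong R u) (ex_intro _ u erefl).

Lemma class_mul_subproof (x y : class) : exists w, class_cat (sval x) (sval y) = rcong R w.
Proof.
case: x y => S [u Su] [T [v Tv]]; exists (u ++ v).
by rewrite /= Su Tv class_catE.
Qed.

Definition class_mul (x y : class) : class :=
  exist _ (class_cat (sval x) (sval y)) (class_mul_subproof x y).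

Definition quot : monoid.
Proof.
refine (@Defs.Monoid class class_mul (cls [::]) _ _ _).
- move=> [S [u Su]] [T [v Tv]] [U [w Uw]]; apply: sval_inj.
  by rewrite /= Su Tv Uw !class_catE catA.
- by move=> [S [u Su]]; apply: sval_inj; rewrite /= Su class_catE.
- by move=> [S [u Su]]; apply: sval_inj; rewrite /= Su class_catE cats0.
Defined.

Lemma clsM u v : mop (cls u : quot) (cls v) = cls (u ++ v).
Proof. by apply: sval_inj; exact: class_catE. Qed.

Lemma cls_eq u v : cls u = cls v <-> rcong R u v.
Proof.
split; first by move=> /(congr1 sval) /= ->; exact: rst_refl.
move=> uv; apply: sval_inj; apply: functional_extensionality => w.
apply: propositional_extensionality; split; last exact: rst_trans.
by apply: rst_trans; exact: rst_sym.
Qed.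

End Quotient.

Lemma presentation_hom (M : monoid) (A B : finType) (R : rules A) (R' : rules B)
    (f : A -> B) (phi : seq A -> M) :
  presentation R phi -> {subset map_rules f R <= R'} ->
  exists h : M -> quot R', is_hom h /\ forall s, h (phi s) = cls R' (map f s).
Proof.
case=> phi0 [phiM [phiS phiK]] subR.
pose rep m := proj1_sig (constructive_indefinite_description _ (phiS m)).
have repK m : phi (rep m) = m := proj2_sig (constructive_indefinite_description _ (phiS m)).
have hE s : cls R' (map f (rep (phi s))) = cls R' (map f s).
  by apply/cls_eq/(rcong_map subR)/phiK; rewrite repK.
exists (fun m => cls R' (map f (rep m))); split => //; split.
- by rewrite -phi0 hE.
- by move=> x y; rewrite -(repK x) -(repK y) -phiM !hE clsM map_cat.
Qed.

Section SumPresentation.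

Variables (M1 M2 P : monoid) (i1 : M1 -> P) (i2 : M2 -> P).
Variables (A1 A2 : finType) (R1 : rules A1) (R2 : rules A2).
Variables (phi1 : seq A1 -> M1) (phi2 : seq A2 -> M2).
Hypotheses (FP : is_free_product i1 i2).
Hypotheses (pres1 : presentation R1 phi1) (pres2 : presentation R2 phi2).

Definition sum_letter (c : (A1 + A2)%type) : P :=
  match c with inl a => i1 (phi1 [:: a]) | inr b => i2 (phi2 [:: b]) end.

Definition sum_eval : seq (A1 + A2)%type -> P :=
  foldr (fun c => mop (sum_letter c)) (munit P).

Lemma sum_evalM u v : sum_eval (u ++ v) = mop (sum_eval u) (sum_eval v).
Proof. by elim: u => [|c u IH] /=; rewrite ?mop1x // IH mopA. Qed.

Lemma sum_eval_inl s : sum_eval (map inl s) = i1 (phi1 s).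
Proof.
have [h1 _] := FP; have [phi0 [phiM _]] := pres1.
elim: s => [|a s IH] /=; first by rewrite phi0 (hom1 h1).
by rewrite IH -(homM _ _ h1) -phiM.
Qed.

Lemma sum_eval_inr s : sum_eval (map inr s) = i2 (phi2 s).
Proof.
have [_ [h2 _]] := FP; have [phi0 [phiM _]] := pres2.
elim: s => [|a s IH] /=; first by rewrite phi0 (hom1 h2).
by rewrite IH -(homM _ _ h2) -phiM.
Qed.

Lemma sum_eval_surj p : exists w, sum_eval w = p.
Proof.
have [_ [_ [phi1S _]]] := pres1; have [_ [_ [phi2S _]]] := pres2.
move: p; apply: (free_product_ind FP) => [|p q [u <-] [v <-]|x|y].
- by exists [::].
- by exists (u ++ v); rewrite sum_evalM.
- by have [s <-] := phi1S x; exists (map inl s); rewrite sum_eval_inl.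
- by have [s <-] := phi2S y; exists (map inr s); rewrite sum_eval_inr.
Qed.

Lemma sum_eval_rcong u v : rcong (sum_rules R1 R2) u v -> sum_eval u = sum_eval v.
Proof.
elim=> {u v} [u v|//|u v _ ->//|u v w _ -> _ ->//].
case=> x [y [l [r [+ [-> ->]]]]]; rewrite !sum_evalM mem_cat.
case/orP => /mapP[[l0 r0] lr [-> ->]] /=.
- by rewrite !sum_eval_inl (presentation_rule pres1 lr).
- by rewrite !sum_eval_inr (presentation_rule pres2 lr).
Qed.

(* Via the morphism P -> quot (sum_rules R1 R2) induced by the universal property. *)
Lemma rcong_sum_eval u v : sum_eval u = sum_eval v -> rcong (sum_rules R1 R2) u v.
Proof.
have sub1 : {subset map_rules inl R1 <= sum_rules R1 R2} by move=> p; rewrite mem_cat => ->.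
have sub2 : {subset map_rules inr R2 <= sum_rules R1 R2}
  by move=> p; rewrite mem_cat orbC => ->.
have [g1 [hg1 g1E]] := presentation_hom pres1 sub1.
have [g2 [hg2 g2E]] := presentation_hom pres2 sub2.
have [_ [_ U]] := FP; have [[h [hh [e1 e2]]] _] := U _ _ _ hg1 hg2.
have h_letter c : h (sum_letter c) = cls (sum_rules R1 R2) [:: c].
  by case: c => [a|b] /=; rewrite ?e1 ?g1E ?e2 ?g2E.
have hE w : h (sum_eval w) = cls (sum_rules R1 R2) w.
  elim: w => [|c w IH] /=; first exact: hom1 hh.
  by rewrite (homM _ _ hh) IH h_letter clsM.
by move=> E; apply/cls_eq; rewrite -!hE E.
Qed.

Lemma presents_sum : presents P (sum_rules R1 R2).
Proof.
exists sum_eval; split => //; split; first exact: sum_evalM.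
split; first exact: sum_eval_surj.
by move=> u v; split; [exact: rcong_sum_eval|exact: sum_eval_rcong].
Qed.

End SumPresentation.

Lemma presentation_closed (M : monoid) (A : finType) (R : rules A) (phi : seq A -> M)
    (Q : pred A) (S : M -> Prop) :
  presentation R phi -> (forall w, all Q w <-> S (phi w)) ->
  forall l r, (l, r) \in R -> all Q l -> all Q r.
Proof. by move=> pres QS l r lr /QS; rewrite (presentation_rule pres lr) => /QS. Qed.

(* The rules preserve the image of i, so words over the restricted alphabet rewrite
   only among themselves, and by confluence two of them are congruent in R iff
   they are congruent in the restricted system. *)
Lemma presentation_restrict (M P : monoid) (i : M -> P) (pi : P -> M)
    (A B : finType) (f : A -> B) (g : B -> option A) (R : rules B) (phi : seq B -> P) :
  pcancel f g -> ocancel g f -> presentation R phi -> confluent R ->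
  is_hom pi -> cancel i pi -> (forall w, all (isSome \o g) w <-> exists m, phi w = i m) ->
  presentation (restrict g R) (fun u => pi (phi (map f u))).
Proof.
move=> fK gK pres conf hpi iK image; case: (pres) => phi0 [phiM [phiS phiK]].
have phi_map u : phi (map f u) = i (pi (phi (map f u))).
  by have [m ->] := (image _).1 (all_in_image fK u); rewrite iK.
have reflR := restrict_reflecting fK gK
  (presentation_closed (S := fun p => exists m, p = i m) pres image).
split; last split; last split.
- by rewrite phi0 (hom1 hpi).
- by move=> u v; rewrite map_cat phiM (homM _ _ hpi).
- move=> m; have [w Ew] := phiS (i m).
  have gw : all (isSome \o g) w by apply/image; exists m.
  by exists (pmap g w); rewrite (pmapK gK gw) Ew iK.
- split; last by move/(rcong_map (restrict_sub gK (R' := R)))/phiK => ->.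
  move=> E; apply: (rcong_reflect reflR (pcan_inj fK) conf).
  by apply/phiK; rewrite phi_map E -phi_map.
Qed.

Lemma fcrs_retract (M P : monoid) (i : M -> P) (pi : P -> M)
    (B : finType) (R : rules B) (phi : seq B -> P) (Q : pred B) :
  presentation R phi -> noetherian R -> confluent R -> is_hom pi -> cancel i pi ->
  (forall w, all Q w <-> exists m, phi w = i m) -> FCRS M.
Proof.
move=> pres wf conf hpi iK imageQ.
pose S := {b | Q b}.
have image w : all (isSome \o (insub : B -> option S)) w <-> exists m, phi w = i m.
  by rewrite (eq_all (isSome_insub _)).
have subR := @restrict_sub _ _ _ _ (insubK S) R.
have reflR := restrict_reflecting valK (insubK S)
  (presentation_closed (S := fun p => exists m, p = i m) pres image).
exists S, (restrict insub R); split.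
  by eexists; exact: presentation_restrict valK (insubK S) pres conf hpi iK image.
by split; [exact: noetherian_map subR wf|exact: confluent_reflect subR reflR val_inj conf].
Qed.

Lemma fcrs_free_factor (M1 M2 P : monoid) (i1 : M1 -> P) (i2 : M2 -> P) :
  homogeneous M2 -> is_free_product i1 i2 -> FCRS P -> FCRS M1.
Proof.
move=> /homogeneous_degree [d [hd d0]] FP [B [R [[phi pres] [wf conf]]]].
have [deg [pi1 [hdeg hpi1 deg_i1 pi1K degP]]] := free_product_degree FP hd d0.
have [phi0 [phiM _]] := pres.
pose Q b := deg (phi [:: b]) == 0.
have allQ w : all Q w = (deg (phi w) == 0).
  elim: w => [|b w IH]; first by rewrite phi0 (hom1 hdeg).
  by rewrite -cat1s phiM (homM _ _ hdeg) addn_eq0 /= IH.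
apply: (fcrs_retract pres wf conf hpi1 pi1K (Q := Q)) => w.
rewrite allQ; split => [/eqP/degP Ew|[m ->]]; first by exists (pi1 (phi w)).
by rewrite deg_i1.
Qed.

Lemma fcrs_free_product (M1 M2 P : monoid) (i1 : M1 -> P) (i2 : M2 -> P) :
  is_free_product i1 i2 -> FCRS M1 -> FCRS M2 -> FCRS P.
Proof.
move=> FP [A1 [R1 [[phi1 pres1] [wf1 conf1]]]] [A2 [R2 [[phi2 pres2] [wf2 conf2]]]].
exists (A1 + A2)%type, (sum_rules R1 R2); split; first exact: presents_sum FP pres1 pres2.
by split; [exact: noetherian_sum|exact: confluent_sum].
Qed.

Theorem corollary4p3 (M1 M2 P : monoid) (i1 : M1 -> P) (i2 : M2 -> P) :
  homogeneous M1 -> homogeneous M2 -> is_free_product i1 i2 ->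
  (FCRS P <-> FCRS M1 /\ FCRS M2).
Proof.
move=> homM1 homM2 FP; split; last by case; exact: fcrs_free_product FP.
move=> fcrsP; split; first exact: fcrs_free_factor homM2 FP fcrsP.
exact: fcrs_free_factor homM1 (free_product_sym FP) fcrsP.
Qed.
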